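(* Let $P$ be a poset and let $2\leq\alpha,\beta\leq\omega$. Then $P$ is $(\alpha,\beta)$-representable if and only if $P\models\psi_{rsn}$ for all $n\in\omega$, all $1\leq r<\alpha$ and all $1\leq s<\beta$.
   Context: A poset $P$ is $(\alpha,\beta)$-representable if there is a set $X$ and an order embedding $h:P\to\wp(X)$ ($\wp(X)$ ordered by inclusion) such that whenever $S\subseteq P$ with $|S|<\alpha$ and $\bigwedge S$ exists in $P$ then $h(\bigwedge S)=\bigcap h[S]$ (with $\bigcap\emptyset=X$), and whenever $T\subseteq P$ with $|T|<\beta$ and $\bigvee T$ exists in $P$ then $h(\bigvee T)=\bigcup h[T]$. The sentences: signature with one binary relation $\leq$; $\vec{x}_k=(x_1,\ldots,x_k)$. For $1\leq k<\omega$: $J_k(\vec{x}_k,y)$ holds under assignment $v$ iff $v(y)$ is the join of $\{v(x_1),\ldots,v(x_k)\}$, $M_k(\vec{x}_k,y)$ iff $v(y)$ is their meet; $C_k(\vec{x}_k,y)=\bigvee_{i=1}^k(y=x_i)$, $D_k=\neg C_k$; $C_{km}(\vec{x}_k,\vec{y}_m)$ holds iff $\{v(y_j)\}\subseteq\{v(x_i)\}$. Let $\sigma_k(\vec{x}_k,c)=\exists z(C_k(\vec{x}_k,z)\wedge z\leq c)$, $\tau_{kr}(\vec{x}_k,\vec{a}_r,c)=C_{kr}(\vec{x}_k,\vec{a}_r)\wedge M_r(\vec{a}_r,c)$, $\rho_{ks}(\vec{x}_k,\vec{b}_s)=\exists z(C_k(\vec{x}_k,z)\wedge J_s(\vec{b}_s,z))$.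 Define $\phi_{krs0}(\vec{x}_k,y)=D_k(\vec{x}_k,y)$ and $\phi_{krs(n+1)}(\vec{x}_k,y)=\forall\vec{a}_r\forall\vec{b}_s\forall c\Big(\big(\sigma_k(\vec{x}_k,c)\to\phi_{(k+1)rsn}(\vec{x}_k,c,y)\big)\wedge\big(\tau_{kr}(\vec{x}_k,\vec{a}_r,c)\to\phi_{(k+1)rsn}(\vec{x}_k,c,y)\big)\wedge\big(\rho_{ks}(\vec{x}_k,\vec{b}_s)\to\bigvee_{i=1}^s\phi_{(k+1)rsn}(\vec{x}_k,b_i,y)\big)\Big)$, and $\psi_{rsn}=\forall x\forall y(\neg(x\leq y)\to\phi_{1rsn}(x,y))$ for $1\leq r,s<\omega$, $n\in\omega$. *)

From Stdlib Require Import List Arith.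
Import ListNotations.

Section Poset.
Context {P : Type} (le : P -> P -> Prop).

Definition is_poset : Prop :=
  (forall x, le x x) /\
  (forall x y, le x y -> le y x -> x = y) /\
  (forall x y z, le x y -> le y z -> le x z).

Definition is_meet (S : P -> Prop) (m : P) : Prop :=
  (forall p, S p -> le m p) /\
  (forall z, (forall p, S p -> le z p) -> le z m).

Definition is_join (S : P -> Prop) (j : P) : Prop :=
  (forall p, S p -> le p j) /\
  (forall z, (forall p, S p -> le p z) -> le j z).
End Poset.

Inductive card : Type := Fin (n : nat) | Omega.

Definition nat_lt_card (k : nat) (a : card) : Prop :=
  match a with Fin n => k < n | Omega => True end.

Definition two_le_card (a : card) : Prop :=
  match a with Fin n => 2 <= n | Omega => True end.

Definition size_lt {P : Type} (S : P -> Prop) (a : card) : Prop :=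
  match a with
  | Fin n => exists l : list P, length l < n /\ forall x, S x -> In x l
  | Omega => exists l : list P, forall x, S x -> In x l
  end.

Definition representable {P : Type} (le : P -> P -> Prop) (alpha beta : card)
  : Prop :=
  exists (X : Type) (h : P -> X -> Prop),
    (forall p q, le p q <-> (forall x, h p x -> h q x)) /\
    (forall (S : P -> Prop) (m : P), size_lt S alpha -> is_meet le S m ->
        forall x, h m x <-> (forall p, S p -> h p x)) /\
    (forall (T : P -> Prop) (j : P), size_lt T beta -> is_join le T j ->
        forall x, h j x <-> (exists p, T p /\ h p x)).

(* Semantics of the formulas phi_{krsn}, with the tuple x_k given as a list
   xs (k = length xs). *)
Section Formulas.
Context {P : Type} (le : P -> P -> Prop).

(* sigma_k(xs, c) = exists z (C_k(xs,z) /\ z <= c) *)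
Definition sigma_f (xs : list P) (c : P) : Prop :=
  exists z, In z xs /\ le z c.

(* tau_kr(xs, as, c) = C_kr(xs, as) /\ M_r(as, c) *)
Definition tau_f (xs as_ : list P) (c : P) : Prop :=
  (forall a, In a as_ -> In a xs) /\ is_meet le (fun z => In z as_) c.

(* rho_ks(xs, bs) = exists z (C_k(xs,z) /\ J_s(bs,z)) *)
Definition rho_f (xs bs : list P) : Prop :=
  exists z, In z xs /\ is_join le (fun w => In w bs) z.

Fixpoint phi (r s n : nat) (xs : list P) (y : P) : Prop :=
  match n with
  | 0 => ~ In y xs
  | S n' =>
      forall (as_ bs : list P) (c : P), length as_ = r -> length bs = s ->
        (sigma_f xs c -> phi r s n' (xs ++ [c]) y) /\
        (tau_f xs as_ c -> phi r s n' (xs ++ [c]) y) /\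
        (rho_f xs bs -> exists b, In b bs /\ phi r s n' (xs ++ [b]) y)
  end.

Definition psi (r s n : nat) : Prop :=
  forall x y : P, ~ le x y -> phi r s n [x] y.
End Formulas.

From Stdlib Require Import List Lia Classical.
From mathcomp Require boolp classical_sets.
Import ListNotations.

(* A point u of an (α,β)-representation h yields the (α,β)-prime filter
   {p | u ∈ h p}, and conversely P embeds into the powerset of its prime
   filters as soon as these separate x from y whenever x ≰ y.

   If xs lies in a prime filter omitting y, then φ_{rsn}(xs, y) holds: every
   σ-, τ- or ρ-move can be answered inside the filter.  Conversely, given
   x ≰ y, call a list good when φ_{rsn}(-, y) holds of it for all admissible
   r, s, n.  The axioms ψ make [x] good, and goodness survives σ- and
   τ-moves and some branch of every ρ-move, because finitely many failures
   can be merged into one at the maximum of their indices.  By Zorn's lemma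
   there is a maximal set M such that x :: xs is good for every list xs of
   elements of M; by maximality every move that keeps the lists good forces
   membership in M, so M is a prime filter containing x and omitting y. *)

Ltac solve_incl := intros ?; simpl; rewrite ?in_app_iff; simpl; tauto.

Definition filter_prop {T : Type} (S : T -> Prop) : list T -> list T :=
  filter (fun z => boolp.asbool (S z)).

Lemma In_filter_prop {T : Type} (S : T -> Prop) l z :
  In z (filter_prop S l) <-> In z l /\ S z.
Proof.
  unfold filter_prop; rewrite filter_In.
  split; intros [Hl HS]; split; auto; [apply boolp.asboolW | apply boolp.asboolT]; exact HS.
Qed.

Lemma incl_filter_prop_snoc {T : Type} (S : T -> Prop) (c : T) xs :
  (forall z, In z xs -> S z \/ z = c) -> incl xs (filter_prop S xs ++ [c]).
Proof.
  intros Hxs z Hz; apply in_app_iff.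
  destruct (Hxs z Hz) as [Sz | ->]; [left; apply In_filter_prop; auto | right; left; reflexivity].
Qed.

Lemma pad_list {T : Type} (l : list T) k :
  0 < length l -> length l <= k -> exists l', length l' = k /\ forall z, In z l' <-> In z l.
Proof.
  destruct l as [|a l]; simpl; [lia|]; intros _ Hk.
  exists ((a :: l) ++ repeat a (k - S (length l))); split.
  - rewrite length_app, repeat_length; simpl; lia.
  - intros z; rewrite in_app_iff; split; [|intros Hz; left; exact Hz].
    intros [Hz | Hz]; [exact Hz | apply repeat_spec in Hz; subst; left; reflexivity].
Qed.

Lemma nat_lt_card_max a b c : nat_lt_card a c -> nat_lt_card b c -> nat_lt_card (max a b) c.
Proof. destruct c; simpl; lia. Qed.

Lemma nat_lt_card_1 c : two_le_card c -> nat_lt_card 1 c.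
Proof. destruct c; simpl; lia. Qed.

Lemma size_lt_enum {T : Type} (S : T -> Prop) a :
  size_lt S a -> exists l, (forall z, In z l <-> S z) /\ nat_lt_card (length l) a.
Proof.
  assert (Henum : forall l, (forall z, S z -> In z l) ->
            forall z, In z (filter_prop S l) <-> S z).
  { intros l Hl z; rewrite In_filter_prop; split; [tauto | auto]. }
  destruct a as [n|]; simpl; intros [l Hl].
  - exists (filter_prop S l); split; [apply Henum, Hl|].
    pose proof (filter_length_le (fun z => boolp.asbool (S z)) l); unfold filter_prop; lia.
  - exists (filter_prop S l); split; [apply Henum, Hl | exact I].
Qed.

Lemma size_lt_In {T : Type} (l : list T) a :
  nat_lt_card (length l) a -> size_lt (fun z => In z l) a.
Proof. destruct a; simpl; intros H; exists l; auto. Qed.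

Section CommonBound.
Variables (I A : Type) (valid : I -> Prop) (below : I -> I -> Prop) (Q : I -> A -> Prop).
Hypothesis valid_inhabited : exists i, valid i.
Hypothesis valid_directed : forall i j, valid i -> valid j ->
  exists k, valid k /\ below i k /\ below j k.
Hypothesis Q_mono : forall i j a, valid i -> valid j -> below i j -> Q i a -> Q j a.

Lemma common_bound (L : list A) :
  (forall a, In a L -> exists i, valid i /\ Q i a) ->
  exists i, valid i /\ forall a, In a L -> Q i a.
Proof.
  induction L as [|a L IH]; intros HL.
  - destruct valid_inhabited as [i Hi]; exists i; split; [exact Hi | intros a []].
  - destruct (HL a (or_introl eq_refl)) as [i [Hi Qa]].
    destruct IH as [j [Hj QL]]; [intros b Hb; apply HL; right; exact Hb|].
    destruct (valid_directed i j Hi Hj) as [k [Hk [Hik Hjk]]].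
    exists k; split; [exact Hk|].
    intros b [<- | Hb]; [exact (Q_mono i k a Hi Hk Hik Qa) | exact (Q_mono j k b Hj Hk Hjk (QL b Hb))].
Qed.
End CommonBound.

Lemma zorn_maximal (T : Type) (Q : (T -> Prop) -> Prop) :
  (forall F : (T -> Prop) -> Prop, (forall X, F X -> Q X) ->
     (forall X Y, F X -> F Y -> (forall t, X t -> Y t) \/ (forall t, Y t -> X t)) ->
     Q (fun t => exists2 X, F X & X t)) ->
  exists M, Q M /\ forall N, (forall t, M t -> N t) -> Q N -> forall t, N t -> M t.
Proof.
  intros Hchain.
  destruct (@classical_sets.Zorn_bigcup T Q Hchain) as [M [QM Mmax]].
  exists M; split; [exact QM|].
  intros N HMN QN t Nt; apply NNPP; intros Mt.
  apply (Mmax N); [split; [exact HMN|] | exact QN].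
  intros HNM; exact (Mt (HNM t Nt)).
Qed.

Lemma chain_list {T : Type} (F : (T -> Prop) -> Prop)
  (Hchain : forall X Y, F X -> F Y -> (forall t, X t -> Y t) \/ (forall t, Y t -> X t)) xs :
  (forall z, In z xs -> exists2 X, F X & X z) ->
  xs = [] \/ exists X, F X /\ forall z, In z xs -> X z.
Proof.
  induction xs as [|a xs IH]; intros Hxs; [left; reflexivity|right].
  destruct (Hxs a (or_introl eq_refl)) as [Y FY Ya].
  destruct IH as [-> | [X [FX HX]]]; [intros z Hz; apply Hxs; right; exact Hz| |].
  - exists Y; split; [exact FY|]; intros z [<- | []]; exact Ya.
  - destruct (Hchain X Y FX FY) as [HXY | HYX].
    + exists Y; split; [exact FY|]; intros z [<- | Hz]; auto.
    + exists X; split; [exact FX|]; intros z [<- | Hz]; auto.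
Qed.

Section Poset.
Context {P : Type} (le : P -> P -> Prop).

Lemma is_meet_ext (S S' : P -> Prop) m :
  (forall z, S z <-> S' z) -> is_meet le S m -> is_meet le S' m.
Proof. unfold is_meet; firstorder. Qed.

Lemma is_join_ext (S S' : P -> Prop) j :
  (forall z, S z <-> S' z) -> is_join le S j -> is_join le S' j.
Proof. unfold is_join; firstorder. Qed.

Definition prime_filter (alpha beta : card) (F : P -> Prop) : Prop :=
  (forall p q, F p -> le p q -> F q) /\
  (forall S m, size_lt S alpha -> is_meet le S m -> (forall p, S p -> F p) -> F m) /\
  (forall T j, size_lt T beta -> is_join le T j -> F j -> exists p, T p /\ F p).

Lemma representable_iff_prime_filters_separate alpha beta :
  representable le alpha beta <->
  (forall p q, ~ le p q -> exists F, prime_filter alpha beta F /\ F p /\ ~ F q).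
Proof.
  split.
  - intros [X [h [Hord [Hmeet Hjoin]]]] p q Hpq.
    assert (Hu : exists u, h p u /\ ~ h q u).
    { apply NNPP; intros Hn; apply Hpq, Hord; intros u Hpu.
      apply NNPP; intros Hqu; apply Hn; exists u; auto. }
    destruct Hu as [u [Hpu Hqu]].
    exists (fun p => h p u); split; [split; [|split] | auto].
    + intros p' q' Hp' Hle; exact (proj1 (Hord p' q') Hle u Hp').
    + intros S m HS Hm HF; exact (proj2 (Hmeet S m HS Hm u) HF).
    + intros T j HT Hj HF; exact (proj1 (Hjoin T j HT Hj u) HF).
  - intros Hsep.
    exists {F : P -> Prop | prime_filter alpha beta F}, (fun p F => proj1_sig F p).
    split; [|split].
    + intros p q; split.
      * intros Hpq [F HF] Fp; exact (proj1 HF p q Fp Hpq).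
      * intros Hsub; apply NNPP; intros Hpq.
        destruct (Hsep p q Hpq) as [F [HF [Fp Fq]]].
        exact (Fq (Hsub (exist _ F HF) Fp)).
    + intros S m HS Hm [F HF]; simpl; destruct HF as [Hup [Hmt _]]; split.
      * intros Fm p Sp; exact (Hup m p Fm (proj1 Hm p Sp)).
      * exact (Hmt S m HS Hm).
    + intros T j HT Hj [F HF]; simpl; destruct HF as [Hup [_ Hpr]]; split.
      * exact (Hpr T j HT Hj).
      * intros [p [Tp Fp]]; exact (Hup p j Fp (proj1 Hj p Tp)).
Qed.

Lemma phi_of_prime_filter alpha beta F r s y :
  prime_filter alpha beta F -> ~ F y -> nat_lt_card r alpha -> nat_lt_card s beta ->
  forall n xs, (forall z, In z xs -> F z) -> phi le r s n xs y.
Proof.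
  intros [Hup [Hmeet Hjoin]] Fy Hr Hs n.
  induction n as [|n IH]; simpl; intros xs Hxs.
  - intros Hy; exact (Fy (Hxs y Hy)).
  - assert (Hsnoc : forall b, F b -> forall z, In z (xs ++ [b]) -> F z).
    { intros b Fb z; rewrite in_app_iff; intros [Hz | [-> | []]]; auto. }
    intros as_ bs c Has Hbs; split; [|split].
    + intros [z [Hz Hzc]]; apply IH, Hsnoc, (Hup z c); auto.
    + intros [Hsub Hm]; apply IH, Hsnoc, (Hmeet (fun z => In z as_) c); [| exact Hm | auto].
      apply size_lt_In; rewrite Has; exact Hr.
    + intros [z [Hz Hj]].
      assert (HT : size_lt (fun w => In w bs) beta) by (apply size_lt_In; rewrite Hbs; exact Hs).
      destruct (Hjoin (fun w => In w bs) z HT Hj (Hxs z Hz)) as [b [Hb Fb]].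
      exists b; split; [exact Hb | apply IH, Hsnoc, Fb].
Qed.

Section MaximalConsistent.
Variables (alpha beta : card) (good : list P -> Prop) (x y : P).
Hypothesis good_incl : forall xs ys, incl xs ys -> good ys -> good xs.
Hypothesis good_sigma : forall xs c, good xs -> sigma_f le xs c -> good (xs ++ [c]).
Hypothesis good_tau : forall xs as_ c, good xs -> 0 < length as_ ->
  nat_lt_card (length as_) alpha -> tau_f le xs as_ c -> good (xs ++ [c]).
Hypothesis good_rho : forall xs bs, good xs -> 0 < length bs ->
  nat_lt_card (length bs) beta -> rho_f le xs bs -> exists b, In b bs /\ good (xs ++ [b]).
Hypothesis good_x : good [x].
Hypothesis not_good_y : ~ good [y].

(* Prefixing x lets Zorn's lemma accept the empty chain, whose union is
   x-consistent because [x] is good. *)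
Definition x_consistent (G : P -> Prop) : Prop :=
  forall xs, (forall z, In z xs -> G z) -> good (x :: xs).

Lemma exists_maximal_x_consistent : exists M, x_consistent M /\
  forall N, (forall t, M t -> N t) -> x_consistent N -> forall t, N t -> M t.
Proof.
  apply zorn_maximal; intros F HF Hchain xs Hxs.
  destruct (chain_list F Hchain xs Hxs) as [-> | [X [FX HX]]].
  - exact good_x.
  - exact (HF X FX xs HX).
Qed.

Section Maximal.
Variable M : P -> Prop.
Hypothesis M_consistent : x_consistent M.
Hypothesis M_maximal : forall N, (forall t, M t -> N t) -> x_consistent N -> forall t, N t -> M t.

Lemma maximal_mem_x c :
  (forall xs, (forall z, In z xs -> M z) -> good (x :: xs ++ [c])) -> M c.
Proof.
  intros Hc; apply (M_maximal (fun t => M t \/ t = c)); [auto | | right; reflexivity].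
  intros xs Hxs; apply good_incl with (x :: filter_prop M xs ++ [c]).
  - apply incl_cons; [left; reflexivity | apply incl_tl, incl_filter_prop_snoc, Hxs].
  - apply Hc; intros z Hz; apply In_filter_prop in Hz; tauto.
Qed.

Lemma maximal_x : M x.
Proof.
  apply maximal_mem_x; intros xs Hxs.
  apply good_incl with (x :: xs); [solve_incl | exact (M_consistent xs Hxs)].
Qed.

Lemma maximal_good xs : (forall z, In z xs -> M z) -> good xs.
Proof. intros Hxs; apply good_incl with (x :: xs); [solve_incl | exact (M_consistent xs Hxs)]. Qed.

Lemma maximal_mem c : (forall xs, (forall z, In z xs -> M z) -> good (xs ++ [c])) -> M c.
Proof.
  intros Hc; apply maximal_mem_x; intros xs Hxs.
  apply (Hc (x :: xs)); intros z [<- | Hz]; [exact maximal_x | exact (Hxs z Hz)].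
Qed.

Lemma maximal_not_y : ~ M y.
Proof. intros My; apply not_good_y, maximal_good; intros z [<- | []]; exact My. Qed.

Lemma maximal_up p q : M p -> le p q -> M q.
Proof.
  intros Mp Hpq; apply maximal_mem; intros xs Hxs.
  apply good_incl with ((xs ++ [p]) ++ [q]); [solve_incl|].
  apply good_sigma.
  - apply maximal_good; intros z; rewrite in_app_iff; intros [Hz | [<- | []]]; auto.
  - exists p; split; [apply in_app_iff; right; left; reflexivity | exact Hpq].
Qed.

Lemma maximal_meet S m :
  size_lt S alpha -> is_meet le S m -> (forall p, S p -> M p) -> M m.
Proof.
  intros HS Hm HSM; destruct (size_lt_enum S alpha HS) as [l [Hl Hlen]].
  destruct l as [|a l].
  - apply (maximal_up x); [exact maximal_x|].
    apply (proj2 Hm); intros p Sp; apply Hl in Sp; destruct Sp.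
  - apply maximal_mem; intros xs Hxs.
    apply good_incl with ((xs ++ a :: l) ++ [m]); [solve_incl|].
    apply good_tau with (a :: l); [| simpl; lia | exact Hlen | split].
    + apply maximal_good; intros z; rewrite in_app_iff; intros [Hz | Hz]; [auto | apply HSM, Hl, Hz].
    + intros z Hz; apply in_app_iff; right; exact Hz.
    + apply is_meet_ext with S; [intros z; symmetry; apply Hl | exact Hm].
Qed.

Lemma maximal_join T j :
  size_lt T beta -> is_join le T j -> M j -> exists p, T p /\ M p.
Proof.
  intros HT Hj Mj; destruct (size_lt_enum T beta HT) as [l [Hl Hlen]].
  destruct l as [|a l].
  - exfalso; apply maximal_not_y, (maximal_up j y Mj), (proj2 Hj).
    intros p Tp; apply Hl in Tp; destruct Tp.
  - apply NNPP; intros Hno.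
    assert (Hbad : forall b, In b (a :: l) ->
              exists Z, (forall z, In z Z -> M z) /\ ~ good (Z ++ [b])).
    { intros b Hb; apply NNPP; intros Hall; apply Hno; exists b; split; [apply Hl, Hb|].
      apply maximal_mem; intros xs Hxs; apply NNPP; intros Hg; apply Hall; exists xs; auto. }
    destruct (common_bound (list P) P (fun Z => forall z, In z Z -> M z) (@incl P)
                (fun Z b => ~ good (Z ++ [b]))) with (L := a :: l) as [Z [HZ Hfail]].
    { exists []; intros z []. }
    { intros Z Z' HZ HZ'; exists (Z ++ Z'); split; [|split; solve_incl].
      intros z; rewrite in_app_iff; intros [Hz | Hz]; auto. }
    { intros Z Z' b _ _ HZZ' Hb Hg; apply Hb, good_incl with (Z' ++ [b]); [|exact Hg].
      intros w; rewrite !in_app_iff; specialize (HZZ' w); tauto. }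
    { exact Hbad. }
    destruct (good_rho (Z ++ [j]) (a :: l)) as [b [Hb Hg]]; [| simpl; lia | exact Hlen | |].
    + apply maximal_good; intros z; rewrite in_app_iff; intros [Hz | [-> | []]]; auto.
    + exists j; split; [apply in_app_iff; right; left; reflexivity|].
      apply is_join_ext with T; [intros z; symmetry; apply Hl | exact Hj].
    + apply (Hfail b Hb), good_incl with ((Z ++ [j]) ++ [b]); [solve_incl | exact Hg].
Qed.

Lemma maximal_prime_filter : prime_filter alpha beta M.
Proof. split; [exact maximal_up | split; [exact maximal_meet | exact maximal_join]]. Qed.
End Maximal.

Lemma exists_prime_filter_separating : exists F, prime_filter alpha beta F /\ F x /\ ~ F y.
Proof.
  destruct exists_maximal_x_consistent as [M [HM Mmax]].
  exists M; split; [|split]; [apply maximal_prime_filter | apply maximal_x | apply maximal_not_y];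
    assumption.
Qed.
End MaximalConsistent.

Lemma phi_incl r s y : forall n xs ys, incl xs ys -> phi le r s n ys y -> phi le r s n xs y.
Proof.
  induction n as [|n IH]; simpl; intros xs ys Hi H.
  - intros Hy; exact (H (Hi y Hy)).
  - assert (Hsnoc : forall c, incl (xs ++ [c]) (ys ++ [c]))
      by (intros c; apply incl_app_app; [exact Hi | apply incl_refl]).
    intros as_ bs c Has Hbs; destruct (H as_ bs c Has Hbs) as [Hsig [Htau Hrho]].
    split; [|split].
    + intros [z [Hz Hzc]]; apply IH with (ys ++ [c]); [apply Hsnoc | apply Hsig; exists z; auto].
    + intros [Hsub Hm]; apply IH with (ys ++ [c]); [apply Hsnoc | apply Htau; split; auto].
    + intros [z [Hz Hj]]; destruct Hrho as [b [Hb Hphi]]; [exists z; auto|].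
      exists b; split; [exact Hb | apply IH with (ys ++ [b]); [apply Hsnoc | exact Hphi]].
Qed.

Section PhiGood.
Hypothesis le_refl : forall p, le p p.

Lemma phi_not_In r s y : forall n xs, phi le r s n xs y -> ~ In y xs.
Proof.
  induction n as [|n IH]; simpl; intros xs H Hin; [exact (H Hin)|].
  destruct (H (repeat y r) (repeat y s) y (repeat_length _ _) (repeat_length _ _)) as [Hsig _].
  apply (IH (xs ++ [y])).
  - apply Hsig; exists y; split; [exact Hin | apply le_refl].
  - apply in_app_iff; right; left; reflexivity.
Qed.

Lemma phi_weaken y : forall n N r s R S xs, 1 <= r -> r <= R -> 1 <= s -> s <= S ->
  n <= N -> phi le R S N xs y -> phi le r s n xs y.
Proof.
  induction n as [|n IH]; intros N r s R S xs Hr HrR Hs HsS HnN H.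
  - exact (phi_not_In R S y N xs H).
  - destruct N as [|N]; [lia|]; simpl in *; intros as_ bs c Has Hbs.
    destruct (pad_list as_ R) as [as' [Has' Hin_as]]; [lia | lia |].
    destruct (pad_list bs S) as [bs' [Hbs' Hin_bs]]; [lia | lia |].
    destruct (H as' bs' c Has' Hbs') as [Hsig [Htau Hrho]]; split; [|split].
    + intros Hs'; apply (IH N r s R S); [lia .. | apply Hsig, Hs'].
    + intros [Hsub Hm]; apply (IH N r s R S); [lia .. | apply Htau; split].
      * intros a Ha; apply Hsub, Hin_as, Ha.
      * apply is_meet_ext with (fun z => In z as_); [intros z; symmetry; apply Hin_as | exact Hm].
    + intros [z [Hz Hj]]; destruct Hrho as [b [Hb Hphi]].
      * exists z; split; [exact Hz|].
        apply is_join_ext with (fun w => In w bs); [intros w; symmetry; apply Hin_bs | exact Hj].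
      * exists b; split; [apply Hin_bs, Hb | apply (IH N r s R S); [lia .. | exact Hphi]].
Qed.

Variables (alpha beta : card) (y : P).
Hypotheses (alpha_ge_2 : two_le_card alpha) (beta_ge_2 : two_le_card beta).

Definition admissible (r s : nat) : Prop :=
  1 <= r /\ nat_lt_card r alpha /\ 1 <= s /\ nat_lt_card s beta.

Definition phi_all (xs : list P) : Prop :=
  forall r s n, admissible r s -> phi le r s n xs y.

Lemma admissible_1_1 : admissible 1 1.
Proof. repeat split; try apply nat_lt_card_1; auto. Qed.

Lemma admissible_max r s r' s' :
  admissible r s -> admissible r' s' -> admissible (max r r') (max s s').
Proof.
  intros [Hr1 [Hr [Hs1 Hs]]] [Hr1' [Hr' [Hs1' Hs']]].
  repeat split; try apply nat_lt_card_max; auto; lia.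
Qed.

Lemma phi_all_incl xs ys : incl xs ys -> phi_all ys -> phi_all xs.
Proof. intros Hi Hg r s n Hrs; exact (phi_incl r s y n xs ys Hi (Hg r s n Hrs)). Qed.

Lemma not_phi_all_y : ~ phi_all [y].
Proof. intros H; exact (H 1 1 0 admissible_1_1 (or_introl eq_refl)). Qed.

Lemma phi_all_sigma xs c : phi_all xs -> sigma_f le xs c -> phi_all (xs ++ [c]).
Proof.
  intros Hg Hsig r s n Hrs.
  destruct (Hg r s (S n) Hrs (repeat c r) (repeat c s) c (repeat_length _ _) (repeat_length _ _))
    as [H _].
  exact (H Hsig).
Qed.

Lemma phi_all_tau xs as_ c : phi_all xs -> 0 < length as_ ->
  nat_lt_card (length as_) alpha -> tau_f le xs as_ c -> phi_all (xs ++ [c]).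
Proof.
  intros Hg Hlen Hlt [Hsub Hm] r s n [Hr1 [Hr [Hs1 Hs]]].
  destruct (pad_list as_ (max r (length as_))) as [as' [Has' Hin]]; [lia | lia |].
  assert (Hadm : admissible (max r (length as_)) s).
  { repeat split; try apply nat_lt_card_max; auto; lia. }
  destruct (Hg _ s (S n) Hadm as' (repeat c s) c Has' (repeat_length _ _)) as [_ [Htau _]].
  apply (phi_weaken y n n r s (max r (length as_)) s); [lia .. |].
  apply Htau; split.
  - intros a Ha; apply Hsub, Hin, Ha.
  - apply is_meet_ext with (fun z => In z as_); [intros z; symmetry; apply Hin | exact Hm].
Qed.

Lemma phi_all_rho xs bs : phi_all xs -> 0 < length bs ->
  nat_lt_card (length bs) beta -> rho_f le xs bs -> exists b, In b bs /\ phi_all (xs ++ [b]).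
Proof.
  intros Hg Hlen Hlt [z [Hz Hj]]; apply NNPP; intros Hno.
  destruct (common_bound (nat * nat * nat) P
              (fun '(r, s, n) => admissible r s)
              (fun '(r, s, n) '(r', s', n') => r <= r' /\ s <= s' /\ n <= n')
              (fun '(r, s, n) b => ~ phi le r s n (xs ++ [b]) y))
    with (L := bs) as [[[r0 s0] n0] [Hadm0 Hfail]].
  { exists (1, 1, 0); exact admissible_1_1. }
  { intros [[r s] n] [[r' s'] n'] H H'.
    exists (max r r', max s s', max n n'); split; [apply admissible_max; auto | split; lia]. }
  { intros [[r s] n] [[r' s'] n'] b [Hr1 [_ [Hs1 _]]] _ Hle Hb Hphi.
    apply Hb, (phi_weaken y n n' r s r' s'); [lia .. | exact Hphi]. }
  { intros b Hb; apply NNPP; intros Hok; apply Hno; exists b; split; [exact Hb|].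
    intros r s n Hrs; apply NNPP; intros Hphi; apply Hok; exists (r, s, n); auto. }
  destruct (pad_list bs (max s0 (length bs))) as [bs' [Hbs' Hin]]; [lia | lia |].
  destruct Hadm0 as [Hr1 [Hr [Hs1 Hs]]].
  assert (Hadm : admissible r0 (max s0 (length bs))).
  { repeat split; try apply nat_lt_card_max; auto; lia. }
  destruct (Hg r0 _ (S n0) Hadm (repeat y r0) bs' y (repeat_length _ _) Hbs')
    as [_ [_ Hrho]].
  destruct Hrho as [b [Hb Hphi]].
  - exists z; split; [exact Hz|].
    apply is_join_ext with (fun w => In w bs); [intros w; symmetry; apply Hin | exact Hj].
  - apply (Hfail b (proj1 (Hin b) Hb)), (phi_weaken y n0 n0 r0 s0 r0 (max s0 (length bs)));
      [lia .. | exact Hphi].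
Qed.
End PhiGood.
End Poset.

Theorem theorem5p6 (P : Type) (le : P -> P -> Prop) (HP : is_poset le)
  (alpha beta : card) (Ha : two_le_card alpha) (Hb : two_le_card beta) :
  representable le alpha beta <->
  (forall (n r s : nat), 1 <= r -> nat_lt_card r alpha ->
     1 <= s -> nat_lt_card s beta -> psi le r s n).
Proof.
  destruct HP as [le_refl _].
  rewrite representable_iff_prime_filters_separate; split.
  - intros Hsep n r s _ Hr _ Hs x y Hxy.
    destruct (Hsep x y Hxy) as [F [HF [Fx Fy]]].
    apply (phi_of_prime_filter le alpha beta F r s y HF Fy Hr Hs).
    intros z [<- | []]; exact Fx.
  - intros Hpsi x y Hxy.
    apply (exists_prime_filter_separating le alpha beta (phi_all le alpha beta y)).
    + apply phi_all_incl.
    + apply phi_all_sigma.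
    + apply phi_all_tau; exact le_refl.
    + apply phi_all_rho; assumption.
    + intros r s n [Hr1 [Hr [Hs1 Hs]]]; exact (Hpsi n r s Hr1 Hr Hs1 Hs x y Hxy).
    + apply not_phi_all_y; assumption.
Qed.
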